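(* Let $n\ge 3$, let $a<b<c$ be elements of $\mathcal{C}_n$ and let $k$ be an integer with $a+1\le k\le b$. Then the semiring $\mathcal{L}^{k}_{a}\left(\triangle^{(n)}\{a,b,c\}\right)=\{a_kb_{n-k-i}c_i:\ 0\le i\le n-k\}$ is isomorphic to the string $\mathcal{STR}^{(n-k)}\{b-k,c-k\}$.
   Context: For $N\ge1$, $\mathcal{C}_N=\{0,1,\dots,N-1\}$ with its usual order; $\widehat{\mathcal{E}}_{\mathcal{C}_N}$ is the set of all order-preserving maps $\mathcal{C}_N\to\mathcal{C}_N$ (not required to fix $0$), a semiring with $(\alpha+\beta)(x)=\max(\alpha(x),\beta(x))$ and $(\alpha\cdot\beta)(x)=\beta(\alpha(x))$. The notation $a_kb_\ell c_m$ (with $k+\ell+m=N$) denotes the map sending $0,\dots,k-1$ to $a$, the next $\ell$ elements to $b$ and the last $m$ to $c$. The triangle $\triangle^{(n)}\{a,b,c\}$ is the set of $\alpha\in\widehat{\mathcal{E}}_{\mathcal{C}_n}$ with image in $\{a,b,c\}$; its layer $\mathcal{L}^{k}_{a}$ is the set of elements mapping exactly $k$ elements to $a$ (a subsemiring for $a+1\le k\le b$). For $x<y$ in $\mathcal{C}_N$, the string $\mathcal{STR}^{(N)}\{x,y\}$ is the subsemiring of $\widehat{\mathcal{E}}_{\mathcal{C}_N}$ of maps with image in $\{x,y\}$. Isomorphism means semiring isomorphism (bijection preserving $+$ and $\cdot$). *)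

From mathcomp Require Import all_boot all_order.
Set Implicit Arguments. Unset Strict Implicit. Unset Printing Implicit Defensive.

(* Maps C_N -> C_N, with C_N = 'I_N = {0,...,N-1}. *)
Definition emap (N : nat) := {ffun 'I_N -> 'I_N}.

Definition ordpres N (f : emap N) : bool :=
  [forall x : 'I_N, forall y : 'I_N, (x <= y)%N ==> (f x <= f y)%N].

Definition eplus N (f g : emap N) : emap N :=
  [ffun x => if (f x <= g x)%N then g x else f x].

Definition emul N (f g : emap N) : emap N := [ffun x => g (f x)].

Definition triangle n (a b c : 'I_n) (f : emap n) : bool :=
  ordpres f && [forall x, [|| f x == a, f x == b | f x == c]].

Definition layer n (a b c : 'I_n) (k : nat) (f : emap n) : bool :=
  triangle a b c f && (#|[set x | f x == a]| == k).

Definition str (N : nat) (x y : nat) (f : emap N) : bool :=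
  ordpres f && [forall z, (val (f z) == x) || (val (f z) == y)].

Definition seg3 n (a b c : 'I_n) (k l : nat) : emap n :=
  [ffun x : 'I_n => if (x < k)%N then a else if (x < k + l)%N then b else c].

Definition semiring_iso N M (P : emap N -> bool) (Q : emap M -> bool) : Prop :=
  exists phi : emap N -> emap M,
    [/\ (forall f, P f -> Q (phi f)),
        (forall f g, P f -> P g -> phi f = phi g -> f = g),
        (forall h, Q h -> exists2 f, P f & phi f = h),
        (forall f g, P f -> P g -> phi (eplus f g) = eplus (phi f) (phi g)) &
        (forall f g, P f -> P g -> phi (emul f g) = emul (phi f) (phi g))].

(** The layer consists of the maps that are [a] on the first [k] points and
    then a monotone two-valued step into [{b, c}]: every level set
    [{x | f x <= v}] of a monotone map on a chain is an initial segment, so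
    such a map is fixed by the lengths of its segments.  Forgetting the first
    [k] points and lowering all values by [k] is then a bijection onto the
    string [STR^{(n-k)}{b-k, c-k}]; it commutes with pointwise [max] in
    general, and with composition because layer maps send [[k, n)] into
    itself. *)

From mathcomp Require Import all_boot all_order.
From mathcomp Require Import zify.

Lemma card_ord_ltn n m : (m <= n)%N -> #|[set y : 'I_n | (y < m)%N]| = m.
Proof.
move=> le_mn.
have -> : [set y : 'I_n | (y < m)%N] = widen_ord le_mn @: [set: 'I_m].
  apply/setP => y; rewrite inE; apply/idP/imsetP => [lt_ym | [z _ ->]].
    by exists (Ordinal lt_ym); last exact: val_inj.
  exact: (ltn_ord z).
rewrite card_imset; first by rewrite cardsT card_ord.
by move=> u v /(congr1 val) eq_uv; apply: val_inj.
Qed.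

Lemma mem_downset_card n (D : {set 'I_n}) :
  (forall x y : 'I_n, (y <= x)%N -> x \in D -> y \in D) ->
  forall x : 'I_n, (x \in D) = (x < #|D|)%N.
Proof.
move=> downD x; apply/idP/idP => [Dx | lt_xD].
  have : [set y : 'I_n | (y < x.+1)%N] \subset D.
    by apply/subsetP => y; rewrite inE ltnS => le_yx; apply: downD Dx.
  by move/subset_leq_card; rewrite card_ord_ltn.
apply/negPn/negP => Dx'.
have : D \subset [set y : 'I_n | (y < x)%N].
  apply/subsetP => y Dy; rewrite inE ltnNge; apply/negP => le_xy.
  by rewrite (downD _ _ le_xy Dy) in Dx'.
move/subset_leq_card; rewrite card_ord_ltn; last exact: ltnW.
by rewrite leqNgt lt_xD.
Qed.

Lemma ordpresP N (f : emap N) :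
  reflect {homo f : x y / (x <= y)%N >-> (x <= y)%N} (ordpres f).
Proof.
apply: (iffP forallP) => [mono_f x y | mono_f x].
  by move/(_ x)/forallP/(_ y)/implyP: mono_f.
by apply/forallP => y; apply/implyP; apply: mono_f.
Qed.

Lemma ordpres_leq_card N (f : emap N) (v : nat) : ordpres f ->
  forall x, (f x <= v)%N = (x < #|[set y | (f y <= v)%N]|)%N.
Proof.
move=> /ordpresP mono_f x; rewrite -mem_downset_card ?inE //.
by move=> {}x y le_yx; rewrite !inE => /(leq_trans (mono_f _ _ le_yx)).
Qed.

Section Shift.
Variables n k : nat.

Lemma addk_ord_subproof (y : 'I_(n - k)) : (k + y < n)%N.
Proof. by rewrite -ltn_subRL. Qed.

Definition addk_ord (y : 'I_(n - k)) : 'I_n := Ordinal (addk_ord_subproof y).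

Lemma shift_subproof (f : emap n) (y : 'I_(n - k)) : (f (addk_ord y) - k < n - k)%N.
Proof. by have := ltn_ord (f (addk_ord y)); have := ltn_ord y; lia. Qed.

Definition shift (f : emap n) : emap (n - k) :=
  [ffun y => Ordinal (shift_subproof f y)].

Lemma shiftE f y : val (shift f y) = (f (addk_ord y) - k)%N.
Proof. by rewrite ffunE. Qed.

Lemma ordpres_shift f : ordpres f -> ordpres (shift f).
Proof.
move=> /ordpresP mono_f; apply/ordpresP => x y le_xy.
by rewrite !shiftE leq_sub2r // mono_f //= leq_add2l.
Qed.

Lemma shift_eplus f g : shift (eplus f g) = eplus (shift f) (shift g).
Proof.
apply/ffunP => y; apply: val_inj; rewrite /eplus !ffunE /= !ffunE.
by case: ifP => ?; case: ifP => /=; lia.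
Qed.

Lemma shift_emul (f g : emap n) : (forall x : 'I_n, (k <= x)%N -> (k <= f x)%N) ->
  shift (emul f g) = emul (shift f) (shift g).
Proof.
move=> f_up; apply/ffunP => y; apply: val_inj.
have addk_shift : addk_ord (shift f y) = f (addk_ord y).
  by apply: val_inj; rewrite /= shiftE subnKC // f_up //= leq_addr.
by rewrite /emul shiftE ffunE [in RHS]ffunE shiftE addk_shift.
Qed.

End Shift.

Arguments shift {n} k f.

Section Layer.
Variables (n : nat) (a b c : 'I_n) (k : nat).
Hypotheses (lt_ab : (a < b)%N) (lt_bc : (b < c)%N) (le_kb : (k <= b)%N).

Lemma val_seg3 l x : (seg3 a b c k l x : nat) =
  if (x < k)%N then a : nat else if (x < k + l)%N then b : nat else c : nat.
Proof. by rewrite /seg3 ffunE !(fun_if val). Qed.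

Lemma seg3_layer l : (l <= n - k)%N -> layer a b c k (seg3 a b c k l).
Proof.
move=> le_l; have lt_cn := ltn_ord c.
rewrite /layer /triangle -andbA; apply/and3P; split.
- apply/ordpresP => x y le_xy; rewrite !val_seg3.
  by do ![case: ifP => ?]; lia.
- apply/forallP => x; rewrite /seg3 ffunE.
  by case: (x < k)%N; case: (x < k + l)%N; rewrite eqxx ?orbT.
- have -> : [set x | seg3 a b c k l x == a] = [set y : 'I_n | (y < k)%N].
    apply/setP => x; rewrite !inE -val_eqE /= val_seg3.
    by do ![case: ifP => ?]; lia.
  by rewrite card_ord_ltn //; lia.
Qed.

Lemma layer_seg3 f :
  layer a b c k f -> exists2 l, (l <= n - k)%N & f = seg3 a b c k l.
Proof.
case/andP => /andP [mono_f /forallP f_abc] /eqP card_a.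
have lt_ac := ltn_trans lt_ab lt_bc.
have f_cases x : [\/ f x = a, f x = b | f x = c].
  by case/or3P: (f_abc x) => /eqP; [constructor 1 | constructor 2 | constructor 3].
have leq_a x : (f x <= a)%N = (f x == a).
  rewrite -val_eqE; case: (f_cases x) => ->; first by rewrite leqnn eqxx.
    by rewrite leqNgt lt_ab gtn_eqF.
  by rewrite leqNgt lt_ac gtn_eqF.
have a_set : [set y | (f y <= a)%N] = [set y | f y == a].
  by apply/setP => y; rewrite !inE leq_a.
set j := #|[set y | (f y <= b)%N]|.
have lt_a x : (f x == a) = (x < k)%N by rewrite -leq_a ordpres_leq_card // a_set card_a.
have lt_b x : (f x <= b)%N = (x < j)%N by rewrite ordpres_leq_card.
have le_kj : (k <= j)%N.
  rewrite -card_a -a_set; apply/subset_leq_card/subsetP => y.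
  by rewrite !inE => /leq_trans; apply; apply: ltnW.
have le_jn : (j <= n)%N by rewrite -[n]card_ord max_card.
exists (j - k); first by rewrite leq_sub2r.
apply/ffunP => x; apply: val_inj; rewrite /= val_seg3 subnKC // -lt_a -lt_b -val_eqE.
case: (f_cases x) => ->; rewrite ?eqxx ?leqnn //.
  by rewrite gtn_eqF.
by rewrite gtn_eqF // leqNgt lt_bc.
Qed.

Lemma layer_upper_stable f (x : 'I_n) : layer a b c k f -> (k <= x)%N -> (k <= f x)%N.
Proof.
move=> /layer_seg3 [l _ ->] le_kx; rewrite ffunE ltnNge le_kx /=.
by case: ifP => _; [exact: le_kb | exact: ltnW (leq_ltn_trans le_kb lt_bc)].
Qed.

Lemma shift_seg3 l (y : 'I_(n - k)) :
  val (shift k (seg3 a b c k l) y) = if (y < l)%N then (b - k)%N else (c - k)%N.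
Proof. by rewrite shiftE ffunE /= ltnNge leq_addr ltn_add2l; case: ifP. Qed.

Lemma shift_layer_str f :
  layer a b c k f -> str (b - k) (c - k) (shift k f).
Proof.
move=> layer_f; apply/andP; split.
  by apply: ordpres_shift; case/andP: layer_f => /andP [].
case/layer_seg3: layer_f => l _ ->.
by apply/forallP => y; rewrite shift_seg3; case: ifP; rewrite eqxx ?orbT.
Qed.

Lemma shift_layer_inj f g : layer a b c k f -> layer a b c k g ->
  shift k f = shift k g -> f = g.
Proof.
move=> /layer_seg3 [l1 le_l1 ->] /layer_seg3 [l2 le_l2 ->] eq_shift.
suff -> : l1 = l2 by [].
wlog lt_l12 : l1 l2 le_l1 le_l2 eq_shift / (l1 < l2)%N.
  move=> wlog_l; case: (ltngtP l1 l2) => // [lt_l12 | lt_l21].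
    exact: wlog_l.
  by apply/esym/wlog_l.
have lt_l1 : (l1 < n - k)%N by apply: leq_trans lt_l12 le_l2.
have := congr1 (fun h : emap (n - k) => val (h (Ordinal lt_l1))) eq_shift.
rewrite /= !shift_seg3 /= ltnn lt_l12 => /eqP.
by have := ltn_ord c; rewrite eqn_sub2rE; lia.
Qed.

Lemma shift_layer_surj h : str (b - k) (c - k) h ->
  exists2 f, layer a b c k f & shift k f = h.
Proof.
case/andP => mono_h /forallP h_bc.
have lt_cn := ltn_ord c.
set m := #|[set y | (h y <= b - k)%N]|.
have le_mn : (m <= n - k)%N by rewrite -[n - k]card_ord max_card.
exists (seg3 a b c k m); first exact: seg3_layer.
apply/ffunP => y; apply: val_inj; rewrite shift_seg3 -ordpres_leq_card //.
by case/orP: (h_bc y) => /eqP /= ->; case: ifP => /=; lia.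
Qed.

End Layer.

Theorem proposition28 (n : nat) (a b c : 'I_n) (k : nat) :
  (3 <= n)%N -> (a < b)%N -> (b < c)%N -> (a + 1 <= k)%N -> (k <= b)%N ->
  (forall f : emap n,
     layer a b c k f <-> exists2 i, (i <= n - k)%N & f = seg3 a b c k (n - k - i))
  /\ semiring_iso (layer a b c k) (@str (n - k) (b - k) (c - k)).
Proof.
move=> _ lt_ab lt_bc _ le_kb.
split=> [f | ].
  split=> [/layer_seg3 [] // l le_l -> | [i le_i ->]].
    by exists (n - k - l); rewrite ?leq_subr // subKn.
  by apply: seg3_layer; rewrite ?leq_subr.
exists (shift k); split.
- exact: shift_layer_str.
- exact: shift_layer_inj.
- exact: shift_layer_surj.
- by move=> f g _ _; apply: shift_eplus.
- by move=> f g layer_f _; apply/shift_emul => x; apply: layer_upper_stable layer_f.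
Qed.
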